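(* Let $\gamma\in\mathcal{N}_G\cap\mathcal{N}_L$ be semisimple and suppose $v\in V$ satisfies $\gamma v=\zeta v$ for some $\zeta\in K^\times$. Let $\bar v=\pi(v)\in E$ and write $\bar v=\bar v_1\oplus\bar v_2\oplus\cdots$ with $\bar v_i\in E_i$. Then for each $i$, $\bar\gamma_i(\bar v_i)=\zeta^i\bar v_i$, where $\bar\gamma_i$ is the image of $\gamma$ in $\mathrm{GL}(E_i)$.
   Context: Let $K$ be an algebraically closed field of characteristic $0$, $V$ a finite-dimensional $K$-vector space, $G\subset\mathrm{GL}(V)$ a finite group generated by (pseudo)reflections and $L$ a normal subgroup of $G$. Let $S$ be the graded algebra of polynomial functions on $V$, with $\mathrm{GL}(V)$ acting by $(gf)(v)=f(g^{-1}v)$; $A_+$ denotes the positive-degree part of a graded algebra $A$. Let $\mathcal{N}_G,\mathcal{N}_L$ be the normalisers of $G$, $L$ in $\mathrm{GL}(V)$. Let $E^*$ be an $\mathcal{N}_L$-stable graded complement to $(S^L_+)^2$ in $S^L_+$, and $E=\oplus_i E_i$ its graded dual, where $E_i$ is dual to the degree-$i$ part of $E^*$. Let $(Q_1,\dots,Q_s)$ be a homogeneous basis of $E^*$ with dual basis $(e_1,\dots,e_s)$ of $E$, and let $\pi:V\to E$, $\pi(v)=\sum_j Q_j(v)e_j$ (this factors through a closed embedding $V/L\hookrightarrow E$). $\bar G=G/L$ acts on $E$; assume it acts as a group generated by reflections. *)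

From HB Require Import structures.
From mathcomp Require Import all_boot all_order all_algebra.
From mathcomp Require Import mpoly.
Set Implicit Arguments. Unset Strict Implicit. Unset Printing Implicit Defensive.
Import Order.TTheory GRing.Theory Num.Theory.
Local Open Scope ring_scope.

(* V = 'cV[K]_n (column vectors), GL(V) = invertible n x n matrices,
   S = {mpoly K[n]} (polynomial functions on V, variable 'X_i = i-th coordinate). *)

Section Defs.
Variable K : fieldType.

(* The action (g f)(v) = f(g^-1 v) of GL(V) on S. *)
Definition act n (g : 'M[K]_n) (p : {mpoly K[n]}) : {mpoly K[n]} :=
  p \mPo [tuple (\sum_(j < n) (invmx g) i j *: 'X_j) | i < n].

Definition evalv n (p : {mpoly K[n]}) (v : 'cV[K]_n) : K := p.@[fun i => v i 0].

Definition pseudo_reflection n (g : 'M[K]_n) : bool :=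
  (g \in unitmx) && (\rank (g - 1%:M)%R == 1)%N.

Definition finite_matgroup n (G : ('M[K]_n -> Prop)) : Prop :=
  [/\ exists s : seq 'M[K]_n, forall g, G g <-> g \in s,
      G 1%:M,
      forall g h, G g -> G h -> G (g *m h)
    & forall g, G g -> g \in unitmx /\ G (invmx g)].

Definition generated_by_reflections n (G : ('M[K]_n -> Prop)) : Prop :=
  forall g, G g -> exists r : seq 'M[K]_n,
    (forall x, x \in r -> G x /\ pseudo_reflection x) /\
    g = foldr (@mulmx K n n n) 1%:M r.

Definition normal_subgroup n (L G : ('M[K]_n -> Prop)) : Prop :=
  (forall l, L l -> G l) /\
  (forall g l, G g -> L l -> L (g *m l *m invmx g)).

Definition in_normaliser n (G : ('M[K]_n -> Prop)) (gamma : 'M[K]_n) : Prop :=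
  gamma \in unitmx /\ forall g, G g <-> G (gamma *m g *m invmx gamma).

Definition invariant n (L : ('M[K]_n -> Prop)) (p : {mpoly K[n]}) : Prop :=
  forall l, L l -> act l p = p.

Definition SLplus n (L : ('M[K]_n -> Prop)) (p : {mpoly K[n]}) : Prop :=
  invariant L p /\ p@_0%MM = 0.

Definition SLplus2 n (L : ('M[K]_n -> Prop)) (p : {mpoly K[n]}) : Prop :=
  exists r : seq ({mpoly K[n]} * {mpoly K[n]}),
    (forall x, x \in r -> SLplus L x.1 /\ SLplus L x.2) /\
    p = \sum_(x <- r) x.1 * x.2.

Definition in_span n s (Q : 'I_s -> {mpoly K[n]}) (p : {mpoly K[n]}) : Prop :=
  exists c : 'I_s -> K, p = \sum_(j < s) c j *: Q j.

(* (Q_1..Q_s) is a homogeneous basis (Q_j of degree deg j) of an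
   N_L-stable graded complement E^* of (S^L_+)^2 in S^L_+ *)
Definition graded_complement_basis n s (L : ('M[K]_n -> Prop))
    (Q : 'I_s -> {mpoly K[n]}) (deg : 'I_s -> nat) : Prop :=
  [/\ (forall j, Q j \is (deg j).-homog),
      (forall j, SLplus L (Q j)),
      (forall c : 'I_s -> K, \sum_(j < s) c j *: Q j = 0 -> forall j, c j = 0),
      (forall p, in_span Q p -> SLplus2 L p -> p = 0) /\
      (forall p, SLplus L p -> exists2 q, in_span Q q & SLplus2 L (p - q))
    & (forall g, in_normaliser L g -> forall j, in_span Q (act g (Q j)))].

(* E = K^s (row vectors) with basis e_j dual to Q_j; an element x of E is the
   functional Q_m |-> x_m on E^*.  [dual_mx Q g M] says that M is the matrix
   (acting on row vectors, x |-> x *m M) of the image gbar of g in GL(E),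
   i.e. of the contragredient action (gbar phi)(f) = phi(g^-1 f), f in E^*. *)
Definition dual_mx n s (Q : 'I_s -> {mpoly K[n]}) (g : 'M[K]_n) (M : 'M[K]_s) : Prop :=
  forall k, act (invmx g) (Q k) = \sum_(m < s) M m k *: Q m.

Definition Gbar n s (G : ('M[K]_n -> Prop)) (Q : 'I_s -> {mpoly K[n]}) : ('M[K]_s -> Prop) :=
  fun M => exists g, G g /\ dual_mx Q g M.

Definition piVE n s (Q : 'I_s -> {mpoly K[n]}) (v : 'cV[K]_n) : 'rV[K]_s :=
  \row_j evalv (Q j) v.

(* component of x in E_i = span (e_j | deg j = i) *)
Definition compEi s (deg : 'I_s -> nat) (i : nat) (x : 'rV[K]_s) : 'rV[K]_s :=
  \row_j (if deg j == i then x 0 j else 0).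

End Defs.

From HB Require Import structures.
From mathcomp Require Import all_boot all_order all_algebra.
From mathcomp Require Import mpoly.
Import Order.TTheory GRing.Theory Num.Theory.
Local Open Scope ring_scope.

Set Implicit Arguments.
Unset Strict Implicit.
Unset Printing Implicit Defensive.

(* gamma^-1 acts on S by the linear substitution x |-> gamma x, which
   preserves degrees; as the Q_j are homogeneous and linearly independent, the
   matrix M of gamma-bar is block diagonal along E = E_1 + E_2 + ...  Moreover
   pi(gamma v) = pi(v) M, and pi(zeta v) scales the E_i-component of pi(v) by
   zeta^i. *)

Section LinearSubstitution.
Variables (K : fieldType) (n : nat).

Definition lin_subst (g : 'M[K]_n) : n.-tuple {mpoly K[n]} :=
  [tuple \sum_(j < n) g i j *: 'X_j | i < n].

Lemma act_invmx (g : 'M[K]_n) p : act (invmx g) p = p \mPo lin_subst g.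
Proof. by rewrite /act invmxK. Qed.

Lemma dhomog1_lin_subst (g : 'M[K]_n) i : tnth (lin_subst g) i \is 1.-homog.
Proof.
rewrite tnth_mktuple; apply: rpred_sum => j _; apply: rpredZ.
by rewrite dhomogX; apply/eqP; exact: mdeg1.
Qed.

Lemma dhomog_comp_mpoly1 d (p : {mpoly K[n]}) (lq : n.-tuple {mpoly K[n]}) :
  p \is d.-homog -> (forall i, tnth lq i \is 1.-homog) -> p \mPo lq \is d.-homog.
Proof.
move=> homp homlq; rewrite comp_mpolyE big_seq; apply: rpred_sum => m supp_m.
apply: rpredZ; rewrite -(dhomog_mf homp supp_m) /= mdegE.
apply: (big_rec2 (fun k (q : {mpoly K[n]}) => q \is k.-homog)); first exact: dhomog1.
move=> i k q _ homq; rewrite -[X in (X + k)%N]mul1n.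
exact/dhomogM/homq/dhomogMn.
Qed.

Lemma dhomog_lin_subst d (p : {mpoly K[n]}) (g : 'M[K]_n) :
  p \is d.-homog -> p \mPo lin_subst g \is d.-homog.
Proof. by move=> homp; apply: dhomog_comp_mpoly1 => // i; apply: dhomog1_lin_subst. Qed.

Lemma evalv_lin_subst (g : 'M[K]_n) p v :
  evalv (p \mPo lin_subst g) v = evalv p (g *m v).
Proof.
rewrite /evalv comp_mpoly_meval; apply: meval_eq => i.
rewrite tnth_mktuple raddf_sum mxE /=.
by apply: eq_bigr => j _; rewrite mevalZ mevalXU.
Qed.

Lemma evalv_dhomogZ d (p : {mpoly K[n]}) z v :
  p \is d.-homog -> evalv p (z *: v) = z ^+ d * evalv p v.
Proof.
move=> homp; rewrite /evalv !mevalE mulr_sumr big_seq [RHS]big_seq.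
apply: eq_bigr => m supp_m; rewrite -(dhomog_mf homp supp_m) /= mdegE.
under eq_bigr do rewrite mxE exprMn.
by rewrite big_split /= prodrXr mulrCA.
Qed.

End LinearSubstitution.

Lemma piVE_dual_mx (K : fieldType) n s (Q : 'I_s -> {mpoly K[n]})
    (g : 'M[K]_n) (M : 'M[K]_s) (v : 'cV[K]_n) :
  dual_mx Q g M -> piVE Q v *m M = piVE Q (g *m v).
Proof.
move=> dualM; apply/rowP => k; rewrite !mxE -evalv_lin_subst -act_invmx dualM.
rewrite /evalv raddf_sum /=; apply: eq_bigr => m _.
by rewrite mxE mevalZ mulrC.
Qed.

Section GradedBasis.
Variables (K : fieldType) (n s : nat).
Variables (Q : 'I_s -> {mpoly K[n]}) (deg : 'I_s -> nat).
Hypothesis Q_homog : forall j, Q j \is (deg j).-homog.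
Hypothesis Q_free : forall c : 'I_s -> K, \sum_(j < s) c j *: Q j = 0 -> forall j, c j = 0.

Lemma pihomog_combination d (c : 'I_s -> K) :
  pihomog mdeg d (\sum_(j < s) c j *: Q j)
    = \sum_(j < s) (if deg j == d then c j else 0) *: Q j.
Proof.
rewrite linear_sum; apply: eq_bigr => j _; rewrite linearZ /=.
have [<-|ne] := eqVneq (deg j) d; first by rewrite pihomog_dE.
by rewrite (pihomog_ne0 _ (Q_homog j)) // scaler0 scale0r.
Qed.

Lemma dual_mx_block_diag (g : 'M[K]_n) (M : 'M[K]_s) m k :
  dual_mx Q g M -> deg m != deg k -> M m k = 0.
Proof.
move=> dualM ne; have := congr1 (pihomog mdeg (deg m)) (dualM k).
rewrite act_invmx (pihomog_ne0 _ (dhomog_lin_subst g (Q_homog k))) 1?eq_sym //.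
rewrite pihomog_combination => /esym/Q_free/(_ m).
by rewrite eqxx.
Qed.

Lemma compEi_mulmx_block_diag i (x : 'rV[K]_s) (M : 'M[K]_s) :
  (forall m k, deg m != deg k -> M m k = 0) ->
  compEi deg i (x *m M) = compEi deg i x *m M.
Proof.
move=> blockM; apply/rowP => k; rewrite !mxE.
under [RHS]eq_bigr do rewrite mxE.
have [<-|ne] := eqVneq (deg k) i; rewrite ?eqxx.
  apply: eq_bigr => m _; have [//|ne] := eqVneq (deg m) (deg k).
  by rewrite blockM // !mulr0.
symmetry; apply: big1 => m _; have [dm|] := eqVneq (deg m) i; last by rewrite mul0r.
by rewrite blockM ?mulr0 // dm eq_sym.
Qed.

Lemma compEi_piVEZ i z (v : 'cV[K]_n) :
  compEi deg i (piVE Q (z *: v)) = z ^+ i *: compEi deg i (piVE Q v).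
Proof.
apply/rowP => k; rewrite !mxE.
have [<-|_] := eqVneq (deg k) i; last by rewrite mulr0.
by rewrite (evalv_dhomogZ _ _ (Q_homog k)).
Qed.

End GradedBasis.

Theorem proposition8p9 (K : closedFieldType) (n s : nat)
    (G L : 'M[K]_n -> Prop) (Q : 'I_s -> {mpoly K[n]}) (deg : 'I_s -> nat)
    (gamma : 'M[K]_n) (v : 'cV[K]_n) (zeta : K) :
  [pchar K] =i pred0 ->
  finite_matgroup G -> generated_by_reflections G ->
  finite_matgroup L -> normal_subgroup L G ->
  graded_complement_basis L Q deg ->
  generated_by_reflections (Gbar G Q) ->
  in_normaliser G gamma -> in_normaliser L gamma -> diagonalizable gamma ->
  zeta != 0 -> gamma *m v = zeta *: v ->
  forall (i : nat) (M : 'M[K]_s), dual_mx Q gamma M ->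
    compEi deg i (piVE Q v) *m M = zeta ^+ i *: compEi deg i (piVE Q v).
Proof.
move=> _ _ _ _ _ [Q_homog _ Q_free _ _] _ _ _ _ _ eigen_v i M dualM.
have blockM m k : deg m != deg k -> M m k = 0.
  exact: (dual_mx_block_diag Q_homog Q_free dualM).
rewrite -compEi_mulmx_block_diag // (piVE_dual_mx _ dualM) eigen_v.
exact: compEi_piVEZ.
Qed.
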